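(* For every pure context $F$, term $t$ and variables $k,k',x$ with $k'\notin\mathrm{fv}(F)\cup\mathrm{fv}(t)$ and $x\notin\mathrm{fv}(F)$, we have $F[\mathcal{S}k.t] \approx \mathcal{S}k'.\,t\{\lambda x.\langle k'\,F[x]\rangle/k\}$.
   Context: The calculus $\lambda_{\mathcal S}$. Terms: $t ::= x \mid \lambda x.t \mid t\,t \mid \mathcal{S}k.t \mid \langle t\rangle$ (shift and reset); values: $v ::= \lambda x.t \mid x$. $\lambda x.t$ binds $x$, $\mathcal{S}k.t$ binds $k$; terms up to $\alpha$-conversion; $\mathrm{fv}$ free variables; capture-avoiding substitution $t\{v/x\}$. Pure contexts $F ::= [\,] \mid v\,F \mid F\,t$; evaluation contexts $E ::= [\,] \mid v\,E \mid E\,t \mid \langle E\rangle$. Reduction: $E[(\lambda x.t)\,v] \to E[t\{v/x\}]$; $E[\langle F[\mathcal{S}k.t]\rangle] \to E[\langle t\{\lambda x.\langle F[x]\rangle/k\}\rangle]$ ($x\notin\mathrm{fv}(F)$); $E[\langle v\rangle]\to E[v]$. $t\Downarrow t'$ iff $t\to^*t'$ and $t'$ irreducible. Normal forms: values, control stuck terms $F[\mathcal{S}k.t]$, open stuck terms $E[x\,v]$. Fresh: not free in the terms/contexts considered. Refined normal form bisimilarity $\approx$: for a relation $\mathcal R$ on terms, $E_0\mathrel{\mathcal R}E_1$ iff either $E_0=E_0'[\langle F_0\rangle]$, $E_1=E_1'[\langle F_1\rangle]$ ($F_i$ pure) with $E_0'[x]\mathrel{\mathcal R}E_1'[x]$ and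 $\langle F_0[x]\rangle\mathrel{\mathcal R}\langle F_1[x]\rangle$ ($x$ fresh), or $E_0=F_0$, $E_1=F_1$ pure with $F_0[x]\mathrel{\mathcal R}F_1[x]$ ($x$ fresh). $v\mathbin{@}y$ is $x\,y$ if $v=x$, $t\{y/x\}$ if $v=\lambda x.t$. $\mathcal R^{\mathrm{rnf}}$ on normal forms: $v_0\mathrel{\mathcal R^{\mathrm{rnf}}}v_1$ if $v_0\mathbin{@}x\mathrel{\mathcal R}v_1\mathbin{@}x$ ($x$ fresh); $E_0[x\,v_0]\mathrel{\mathcal R^{\mathrm{rnf}}}E_1[x\,v_1]$ if $E_0\mathrel{\mathcal R}E_1$ and $v_0\mathrel{\mathcal R^{\mathrm{rnf}}}v_1$; $F_0[\mathcal{S}k.t_0]\mathrel{\mathcal R^{\mathrm{rnf}}}F_1[\mathcal{S}k.t_1]$ if $\langle t_0\{\lambda x.\langle k'\,F_0[x]\rangle/k\}\rangle\mathrel{\mathcal R}\langle t_1\{\lambda x.\langle k'\,F_1[x]\rangle/k\}\rangle$ for fresh $k',x$. $\mathcal R$ is a refined normal form simulation if $t_0\mathrel{\mathcal R}t_1$ and $t_0\Downarrow t_0'$ imply $t_1\Downarrow t_1'$ with $t_0'\mathrel{\mathcal R^{\mathrm{rnf}}}t_1'$; a refined bisimulation if $\mathcal R$ and $\mathcal R^{-1}$ are refined simulations; $\approx$ is the largest refined normal form bisimulation. *)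

(* The calculus lambda_S (shift/reset) in locally nameless
   representation: bound variables are de Bruijn indices, free variables are
   names (atoms = nat).  This represents terms up to alpha-conversion while
   keeping named free variables, so freshness conditions can be stated as in
   the paper. *)
From Stdlib Require Import List Relations.
Import ListNotations.

Definition atom := nat.

Inductive term : Type :=
| BVar  : nat -> term
| FVar  : atom -> term
| Lam   : term -> term           (* \x. t  : binds index 0 in body *)
| App   : term -> term -> term
| Shift : term -> term           (* S k. t : binds index 0 in body *)
| Reset : term -> term.

Fixpoint open_rec (n : nat) (u : term) (t : term) : term :=
  match t with
  | BVar i => if Nat.eqb i n then u else BVar i
  | FVar x => FVar x
  | Lam b => Lam (open_rec (S n) u b)
  | App a b => App (open_rec n u a) (open_rec n u b)
  | Shift b => Shift (open_rec (S n) u b)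
  | Reset b => Reset (open_rec n u b)
  end.
Definition open (t u : term) : term := open_rec 0 u t.

Fixpoint close_rec (n : nat) (x : atom) (t : term) : term :=
  match t with
  | BVar i => BVar i
  | FVar y => if Nat.eqb x y then BVar n else FVar y
  | Lam b => Lam (close_rec (S n) x b)
  | App a b => App (close_rec n x a) (close_rec n x b)
  | Shift b => Shift (close_rec (S n) x b)
  | Reset b => Reset (close_rec n x b)
  end.
Definition close (x : atom) (t : term) : term := close_rec 0 x t.

Definition lam (x : atom) (t : term) : term := Lam (close x t).
Definition shift (k : atom) (t : term) : term := Shift (close k t).

(* substitution of u for the free name x (capture-free: binders are indices) *)
Fixpoint subst (x : atom) (u : term) (t : term) : term :=
  match t with
  | BVar i => BVar i
  | FVar y => if Nat.eqb x y then u else FVar y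
  | Lam b => Lam (subst x u b)
  | App a b => App (subst x u a) (subst x u b)
  | Shift b => Shift (subst x u b)
  | Reset b => Reset (subst x u b)
  end.

Fixpoint fv (t : term) : list atom :=
  match t with
  | BVar _ => []
  | FVar x => [x]
  | Lam b => fv b
  | App a b => fv a ++ fv b
  | Shift b => fv b
  | Reset b => fv b
  end.

Fixpoint lc_at (n : nat) (t : term) : bool :=
  match t with
  | BVar i => Nat.ltb i n
  | FVar _ => true
  | Lam b => lc_at (S n) b
  | App a b => lc_at n a && lc_at n b
  | Shift b => lc_at (S n) b
  | Reset b => lc_at n b
  end.
Definition lc (t : term) : Prop := lc_at 0 t = true.

Definition is_value (t : term) : Prop :=
  match t with
  | Lam _ | FVar _ => True
  | _ => False
  end.

Inductive ctx : Type :=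
| Hole  : ctx
| CAppR : term -> ctx -> ctx
| CAppL : ctx -> term -> ctx
| CReset : ctx -> ctx.

Fixpoint plug (E : ctx) (t : term) : term :=
  match E with
  | Hole => t
  | CAppR v E' => App v (plug E' t)
  | CAppL E' u => App (plug E' t) u
  | CReset E' => Reset (plug E' t)
  end.

Fixpoint ccomp (E E' : ctx) : ctx :=
  match E with
  | Hole => E'
  | CAppR v E1 => CAppR v (ccomp E1 E')
  | CAppL E1 u => CAppL (ccomp E1 E') u
  | CReset E1 => CReset (ccomp E1 E')
  end.

Fixpoint eval_ctx (E : ctx) : Prop :=
  match E with
  | Hole => True
  | CAppR v E' => is_value v /\ eval_ctx E'
  | CAppL E' _ => eval_ctx E'
  | CReset E' => eval_ctx E'
  end.

Fixpoint pure_ctx (E : ctx) : Prop :=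
  match E with
  | Hole => True
  | CAppR v E' => is_value v /\ pure_ctx E'
  | CAppL E' _ => pure_ctx E'
  | CReset _ => False
  end.

Fixpoint fv_ctx (E : ctx) : list atom :=
  match E with
  | Hole => []
  | CAppR v E' => fv v ++ fv_ctx E'
  | CAppL E' u => fv_ctx E' ++ fv u
  | CReset E' => fv_ctx E'
  end.

Fixpoint lc_ctx (E : ctx) : Prop :=
  match E with
  | Hole => True
  | CAppR v E' => lc v /\ lc_ctx E'
  | CAppL E' u => lc_ctx E' /\ lc u
  | CReset E' => lc_ctx E'
  end.

(* the captured continuation \x.<F[x]> (x not in fv F), i.e.
   Lam (close x (Reset (plug F (FVar x)))) = Lam (Reset (plug F (BVar 0)))
   for locally closed F *)
Definition cont_of (F : ctx) : term := Lam (Reset (plug F (BVar 0))).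

Inductive step : term -> term -> Prop :=
| step_beta : forall E t v,
    eval_ctx E -> is_value v ->
    step (plug E (App (Lam t) v)) (plug E (open t v))
| step_shift : forall E F t,
    eval_ctx E -> pure_ctx F ->
    step (plug E (Reset (plug F (Shift t))))
         (plug E (Reset (open t (cont_of F))))
| step_reset : forall E v,
    eval_ctx E -> is_value v ->
    step (plug E (Reset v)) (plug E v).

Definition irreducible (t : term) : Prop := forall t', ~ step t t'.

Definition evaluates (t t' : term) : Prop :=
  clos_refl_trans term step t t' /\ irreducible t'.

Definition relation_t := term -> term -> Prop.

Definition app_at (v : term) (y : atom) : term :=
  match v with
  | Lam b => open b (FVar y)
  | _ => App v (FVar y)
  end.

Definition ctx_rel (R : relation_t) (E0 E1 : ctx) : Prop :=
  (exists E0' F0 E1' F1,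
      eval_ctx E0' /\ eval_ctx E1' /\ pure_ctx F0 /\ pure_ctx F1 /\
      E0 = ccomp E0' (CReset F0) /\ E1 = ccomp E1' (CReset F1) /\
      forall x, ~ In x (fv_ctx E0) -> ~ In x (fv_ctx E1) ->
        R (plug E0' (FVar x)) (plug E1' (FVar x)) /\
        R (Reset (plug F0 (FVar x))) (Reset (plug F1 (FVar x))))
  \/
  (pure_ctx E0 /\ pure_ctx E1 /\
   forall x, ~ In x (fv_ctx E0) -> ~ In x (fv_ctx E1) ->
     R (plug E0 (FVar x)) (plug E1 (FVar x))).

Definition rnf_value (R : relation_t) (v0 v1 : term) : Prop :=
  is_value v0 /\ is_value v1 /\
  forall x, ~ In x (fv v0) -> ~ In x (fv v1) -> R (app_at v0 x) (app_at v1 x).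

Inductive rnf (R : relation_t) : term -> term -> Prop :=
| rnf_val : forall v0 v1, rnf_value R v0 v1 -> rnf R v0 v1
| rnf_open : forall E0 E1 x v0 v1,
    eval_ctx E0 -> eval_ctx E1 ->
    ctx_rel R E0 E1 -> rnf_value R v0 v1 ->
    rnf R (plug E0 (App (FVar x) v0)) (plug E1 (App (FVar x) v1))
| rnf_control : forall F0 F1 t0 t1,
    pure_ctx F0 -> pure_ctx F1 ->
    (forall k', ~ In k' (fv_ctx F0) -> ~ In k' (fv_ctx F1) ->
                ~ In k' (fv t0) -> ~ In k' (fv t1) ->
      R (Reset (open t0 (Lam (Reset (App (FVar k') (plug F0 (BVar 0)))))))
        (Reset (open t1 (Lam (Reset (App (FVar k') (plug F1 (BVar 0))))))))
    -> rnf R (plug F0 (Shift t0)) (plug F1 (Shift t1)).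

Definition rnf_simulation (R : relation_t) : Prop :=
  forall t0 t1 t0', R t0 t1 -> evaluates t0 t0' ->
    exists t1', evaluates t1 t1' /\ rnf R t0' t1'.

Definition rnf_bisimulation (R : relation_t) : Prop :=
  rnf_simulation R /\ rnf_simulation (fun a b => R b a).

Definition rnf_bisim (t0 t1 : term) : Prop :=
  exists R, rnf_bisimulation R /\ R t0 t1.

(** The left-hand side is stuck on its [shift]; so is the right-hand side, with
    the empty pure context.  Comparing the two captures with a fresh [k''] leaves
    [<t{\x.<k'' F[x]>/k}>] on the left and [<t{\x.<(\y.<k'' y>) F[x]>/k}>] on
    the right.  These are related by [adm]: the right-hand side is the left-hand
    side in which some applications [<z a>] of a continuation variable have been
    eta-expanded to [<(\y.<z y>) a>] and some administrative resets added.
    Every reduction step on the left is matched by at least one step on the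
    right (the extra ones reduce the administrative redexes), and normal forms
    are matched by normal forms that are again [adm]-related, hence related by
    the refined normal form lifting.  Determinism of reduction turns this
    one-sided matching into a bisimulation. *)

From Stdlib Require Import List Relations Arith Lia Bool.

Fixpoint lc_ctx_at (n : nat) (E : ctx) : bool :=
  match E with
  | Hole => true
  | CAppR v E => lc_at n v && lc_ctx_at n E
  | CAppL E u => lc_ctx_at n E && lc_at n u
  | CReset E => lc_ctx_at n E
  end.

Lemma lc_at_plug n E u : lc_at n (plug E u) = lc_ctx_at n E && lc_at n u.
Proof.
  induction E; simpl; rewrite ?IHE, ?andb_assoc; auto.
  rewrite <- !andb_assoc, (andb_comm (lc_at n u)); reflexivity.
Qed.

Lemma lc_ctx_at_ccomp n E E' :
  lc_ctx_at n (ccomp E E') = lc_ctx_at n E && lc_ctx_at n E'.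
Proof.
  induction E; simpl; rewrite ?IHE, ?andb_assoc; auto.
  rewrite <- !andb_assoc, (andb_comm (lc_at n t)); reflexivity.
Qed.

Lemma lc_at_S t : forall m, lc_at m t = true -> lc_at (S m) t = true.
Proof.
  induction t; simpl; intros m H; auto.
  - apply Nat.ltb_lt in H. apply Nat.ltb_lt. lia.
  - apply andb_true_iff in H as [H1 H2]. rewrite IHt1, IHt2; auto.
Qed.

Lemma lc_at_le n m t : n <= m -> lc_at n t = true -> lc_at m t = true.
Proof. induction 1; auto using lc_at_S. Qed.

Lemma lc_ctx_at_S E : forall n, lc_ctx_at n E = true -> lc_ctx_at (S n) E = true.
Proof.
  induction E; simpl; intros n H; auto;
    apply andb_true_iff in H as [H1 H2]; rewrite ?lc_at_S, ?IHE; auto.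
Qed.

Lemma lc_ctx_at_of_lc_ctx F : lc_ctx F -> lc_ctx_at 0 F = true.
Proof.
  induction F; simpl; unfold lc; auto;
    intros [H1 H2]; rewrite ?H1, ?H2, ?IHF; auto.
Qed.

Lemma lc_at_open_rec b : forall n u,
  lc_at (S n) b = true -> lc_at n u = true -> lc_at n (open_rec n u b) = true.
Proof.
  induction b; simpl; intros m u H Hu; auto using lc_at_S.
  - destruct (Nat.eqb_spec n m); auto. simpl.
    apply Nat.ltb_lt in H. apply Nat.ltb_lt. lia.
  - apply andb_true_iff in H as [H1 H2]. rewrite IHb1, IHb2; auto.
Qed.

Lemma lc_at_subst t : forall n y u,
  lc_at n t = true -> lc u -> lc_at n (subst y u t) = true.
Proof.
  induction t; simpl; intros m y u H Hu; auto.
  - destruct (Nat.eqb y a); auto. apply (lc_at_le 0); auto. lia.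
  - apply andb_true_iff in H as [H1 H2]. rewrite IHt1, IHt2; auto.
Qed.

Lemma lc_cont_of F : lc_ctx_at 0 F = true -> lc (cont_of F).
Proof. intros H. unfold lc; simpl. rewrite lc_at_plug, lc_ctx_at_S; auto. Qed.

Lemma open_rec_close_rec t : forall n u y,
  lc_at n t = true -> open_rec n u (close_rec n y t) = subst y u t.
Proof.
  induction t; simpl; intros m u y H; auto.
  - destruct (Nat.eqb_spec n m); auto. apply Nat.ltb_lt in H. lia.
  - destruct (Nat.eqb y a); simpl; rewrite ?Nat.eqb_refl; auto.
  - rewrite IHt; auto.
  - apply andb_true_iff in H as [H1 H2]. rewrite IHt1, IHt2; auto.
  - rewrite IHt; auto.
  - rewrite IHt; auto.
Qed.

Lemma close_rec_fresh t : forall n y, ~ In y (fv t) -> close_rec n y t = t.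
Proof.
  induction t; simpl; intros m y H; rewrite ?in_app_iff in H;
    rewrite ?IHt, ?IHt1, ?IHt2; auto.
  destruct (Nat.eqb_spec y a); subst; tauto.
Qed.

Lemma subst_fresh t : forall y u, ~ In y (fv t) -> subst y u t = t.
Proof.
  induction t; simpl; intros y u H; rewrite ?in_app_iff in H;
    rewrite ?IHt, ?IHt1, ?IHt2; auto.
  destruct (Nat.eqb_spec y a); subst; tauto.
Qed.

Lemma close_rec_plug F : forall n y s, ~ In y (fv_ctx F) ->
  close_rec n y (plug F s) = plug F (close_rec n y s).
Proof.
  induction F; simpl; intros m y s H; rewrite ?in_app_iff in H;
    rewrite ?(close_rec_fresh t), ?IHF; tauto.
Qed.

Lemma subst_plug F : forall y u s, ~ In y (fv_ctx F) ->
  subst y u (plug F s) = plug F (subst y u s).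
Proof.
  induction F; simpl; intros y u s H; rewrite ?in_app_iff in H;
    rewrite ?(subst_fresh t), ?IHF; tauto.
Qed.

Lemma subst_subst_fresh t : forall y u z w, ~ In y (fv t) ->
  subst y u (subst z w t) = subst z (subst y u w) t.
Proof.
  induction t; simpl; intros y u z w H; rewrite ?in_app_iff in H;
    rewrite ?IHt, ?IHt1, ?IHt2; auto.
  destruct (Nat.eqb z a); auto. simpl.
  destruct (Nat.eqb_spec y a); subst; tauto.
Qed.

(** * A reduction function *)

Definition valueb (t : term) : bool :=
  match t with Lam _ | FVar _ => true | _ => false end.

Lemma valueb_spec t : valueb t = true <-> is_value t.
Proof. destruct t; simpl; intuition discriminate. Qed.

Fixpoint split_control (t : term) : option (ctx * term) :=
  match t with
  | Shift b => Some (Hole, b)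
  | App a c =>
      match split_control a with
      | Some (F, b) => Some (CAppL F c, b)
      | None =>
          if valueb a then
            match split_control c with
            | Some (F, b) => Some (CAppR a F, b)
            | None => None
            end
          else None
      end
  | _ => None
  end.

Fixpoint reduce (t : term) : option term :=
  match t with
  | App a c =>
      match reduce a with
      | Some a' => Some (App a' c)
      | None =>
          if valueb a then
            match reduce c with
            | Some c' => Some (App a c')
            | None =>
                if valueb c then
                  match a with Lam b => Some (open b c) | _ => None end
                else None
            end
          else None
      end
  | Reset s =>
      match reduce s with
      | Some s' => Some (Reset s')
      | None =>
          if valueb s then Some s
          else
            match split_control s with
            | Some (F, b) => Some (Reset (open b (cont_of F)))
            | None => None
            end
      end
  | _ => None
  end.

Lemma reduce_value v : valueb v = true -> reduce v = None.
Proof. destruct v; simpl; congruence. Qed.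

Lemma split_control_value v : valueb v = true -> split_control v = None.
Proof. destruct v; simpl; congruence. Qed.

Lemma valueb_plug_shift F b : valueb (plug F (Shift b)) = false.
Proof. destruct F; reflexivity. Qed.

Lemma reduce_plug_shift F b : pure_ctx F -> reduce (plug F (Shift b)) = None.
Proof.
  induction F; simpl; intros HF; try tauto.
  - destruct HF as [Hv HF]. apply valueb_spec in Hv.
    rewrite reduce_value, Hv, IHF, valueb_plug_shift; auto.
  - rewrite IHF, valueb_plug_shift; auto.
Qed.

Lemma split_control_plug_shift F b :
  pure_ctx F -> split_control (plug F (Shift b)) = Some (F, b).
Proof.
  induction F; simpl; intros HF; try tauto.
  - destruct HF as [Hv HF]. apply valueb_spec in Hv.
    rewrite split_control_value, Hv, IHF; auto.
  - rewrite IHF; auto.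
Qed.

Lemma split_control_sound t F b :
  split_control t = Some (F, b) -> t = plug F (Shift b) /\ pure_ctx F.
Proof.
  revert F b; induction t; simpl; intros F b H; try discriminate.
  - destruct (split_control t1) as [[F1 b1]|] eqn:C1.
    + injection H as <- <-. destruct (IHt1 _ _ eq_refl) as [-> HF]. simpl; auto.
    + destruct (valueb t1) eqn:V; [|discriminate].
      destruct (split_control t2) as [[F2 b2]|] eqn:C2; [|discriminate].
      injection H as <- <-. destruct (IHt2 _ _ eq_refl) as [-> HF].
      simpl. rewrite <- valueb_spec. auto.
  - injection H as <- <-. simpl; auto.
Qed.

Lemma plug_ccomp E E' t : plug (ccomp E E') t = plug E (plug E' t).
Proof. induction E; simpl; congruence. Qed.

Lemma eval_ctx_ccomp E E' : eval_ctx E -> eval_ctx E' -> eval_ctx (ccomp E E').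
Proof. induction E; simpl; intuition. Qed.

Lemma step_plug E a b : eval_ctx E -> step a b -> step (plug E a) (plug E b).
Proof.
  intros HE H; destruct H; rewrite <- !plug_ccomp; constructor;
    auto using eval_ctx_ccomp.
Qed.

Lemma reduce_plug E t t' :
  eval_ctx E -> reduce t = Some t' -> reduce (plug E t) = Some (plug E t').
Proof.
  intros HE H; induction E as [|v E IHE|E IHE u|E IHE]; simpl in *; auto.
  - destruct HE as [Hv HE]. apply valueb_spec in Hv.
    rewrite reduce_value, Hv, IHE; auto.
  - rewrite IHE; auto.
  - rewrite IHE; auto.
Qed.

Lemma step_reduce t t' : step t t' -> reduce t = Some t'.
Proof.
  intros H; destruct H as [E b v HE Hv|E F b HE HF|E v HE Hv];
    apply reduce_plug; auto; simpl.
  - apply valueb_spec in Hv. rewrite reduce_value, Hv; auto.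
  - rewrite reduce_plug_shift, valueb_plug_shift, split_control_plug_shift; auto.
  - apply valueb_spec in Hv. rewrite reduce_value, Hv; auto.
Qed.

Lemma reduce_step t t' : reduce t = Some t' -> step t t'.
Proof.
  revert t'; induction t; simpl; intros t' H; try discriminate.
  - destruct (reduce t1) as [a|] eqn:R1.
    + injection H as <-. apply (step_plug (CAppL Hole t2)); simpl; auto.
    + destruct (valueb t1) eqn:V1; [|discriminate].
      destruct (reduce t2) as [c|] eqn:R2.
      * injection H as <-. apply (step_plug (CAppR t1 Hole)); simpl; auto.
        rewrite <- valueb_spec; auto.
      * destruct (valueb t2) eqn:V2; [|discriminate].
        destruct t1; try discriminate. injection H as <-.
        apply (step_beta Hole); simpl; auto. apply valueb_spec; auto.
  - destruct (reduce t) as [a|] eqn:R1.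
    + injection H as <-. apply (step_plug (CReset Hole)); simpl; auto.
    + destruct (valueb t) eqn:V.
      * injection H as <-. apply (step_reset Hole); simpl; auto.
        apply valueb_spec; auto.
      * destruct (split_control t) as [[F b]|] eqn:C; [|discriminate].
        injection H as <-. destruct (split_control_sound _ _ _ C) as [-> HF].
        apply (step_shift Hole); simpl; auto.
Qed.

Lemma step_deterministic t u u' : step t u -> step t u' -> u = u'.
Proof. intros H1 H2. apply step_reduce in H1, H2. congruence. Qed.

Lemma irreducible_reduce t : irreducible t <-> reduce t = None.
Proof.
  split.
  - intros H. destruct (reduce t) eqn:E; auto. exfalso; eapply H, reduce_step, E.
  - intros H t' Hs. apply step_reduce in Hs. congruence.
Qed.

Lemma reduce_reset_none s : reduce (Reset s) = None ->
  reduce s = None /\ valueb s = false /\ split_control s = None.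
Proof.
  simpl. destruct (reduce s); [discriminate|]. destruct (valueb s); [discriminate|].
  destruct (split_control s) as [[? ?]|]; [discriminate|]. auto.
Qed.

Lemma reduce_app_none a c : reduce (App a c) = None ->
  reduce a = None /\
  (valueb a = true -> reduce c = None /\ (valueb c = true -> forall b, a <> Lam b)).
Proof.
  simpl. destruct (reduce a); [discriminate|]. intros H; split; auto.
  intros Ha; rewrite Ha in H. destruct (reduce c); [discriminate|]. split; auto.
  intros Hc b ->. rewrite Hc in H. discriminate.
Qed.

Lemma reduce_reset_cases a r : reduce (Reset a) = Some r ->
  (exists a1, reduce a = Some a1 /\ r = Reset a1) \/
  (reduce a = None /\ valueb a = true /\ r = a) \/
  (reduce a = None /\ valueb a = false /\
   exists F b, split_control a = Some (F, b) /\ r = Reset (open b (cont_of F))).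
Proof.
  simpl. destruct (reduce a) as [a1|]; [injection 1 as <-; left; eauto|].
  destruct (valueb a); [injection 1 as <-; auto|].
  destruct (split_control a) as [[F b]|]; [injection 1 as <-|discriminate].
  right; right; eauto 6.
Qed.

Lemma reduce_reset_var_app z a : reduce (Reset (App (FVar z) a)) =
  match reduce a with
  | Some a1 => Some (Reset (App (FVar z) a1))
  | None =>
      match split_control a with
      | Some (F, b) => Some (Reset (open b (cont_of (CAppR (FVar z) F))))
      | None => None
      end
  end.
Proof.
  simpl. destruct (reduce a); [reflexivity|].
  destruct (valueb a), (split_control a) as [[F b]|]; reflexivity.
Qed.

Lemma reduce_lc t t' : reduce t = Some t' -> lc t -> lc t'.
Proof.
  unfold lc. revert t'; induction t; simpl; intros t' H Hl; try discriminate.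
  - apply andb_true_iff in Hl as [H1 H2].
    destruct (reduce t1) as [a|] eqn:R1.
    + injection H as <-. simpl. rewrite (IHt1 a); auto.
    + destruct (valueb t1) eqn:V1; [|discriminate].
      destruct (reduce t2) as [c|] eqn:R2.
      * injection H as <-. simpl. rewrite (IHt2 c), H1; auto.
      * destruct (valueb t2) eqn:V2; [|discriminate].
        destruct t1; try discriminate. injection H as <-. apply lc_at_open_rec; auto.
  - destruct (reduce t) as [a|] eqn:R1.
    + injection H as <-. simpl. apply IHt; auto.
    + destruct (valueb t) eqn:V; [injection H as <-; auto|].
      destruct (split_control t) as [[F b]|] eqn:C; [|discriminate].
      injection H as <-. destruct (split_control_sound _ _ _ C) as [-> HF].
      rewrite lc_at_plug in Hl. apply andb_true_iff in Hl as [H1 H2].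
      apply lc_at_open_rec; auto. apply lc_cont_of; auto.
Qed.

Definition star : relation term := clos_refl_trans term step.
Definition plus (a b : term) : Prop := exists m, step a m /\ star m b.

Lemma star_plug E a b : eval_ctx E -> star a b -> star (plug E a) (plug E b).
Proof.
  intros HE H; induction H; [apply rt_step, step_plug; auto|apply rt_refl|].
  eapply rt_trans; eauto.
Qed.

Lemma plus_plug E a b : eval_ctx E -> plus a b -> plus (plug E a) (plug E b).
Proof.
  intros HE (m & H1 & H2). exists (plug E m). auto using step_plug, star_plug.
Qed.

Lemma plus_star a b : plus a b -> star a b.
Proof. intros (m & H1 & H2). eapply rt_trans; [apply rt_step|]; eauto. Qed.

Lemma step_plus a b : step a b -> plus a b.
Proof. intros H; exists b; split; auto; apply rt_refl. Qed.

Lemma star_plus_trans a b c : star a b -> plus b c -> plus a c.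
Proof.
  intros H Hp. apply clos_rt_rt1n in H. destruct H as [|m b0 Hs H]; auto.
  exists m. split; auto. eapply rt_trans; [apply clos_rt1n_rt, H|apply plus_star, Hp].
Qed.

Lemma star_lc a b : star a b -> lc a -> lc b.
Proof. induction 1; eauto using reduce_lc, step_reduce. Qed.

Lemma plus_lc a b : plus a b -> lc a -> lc b.
Proof. intros H. apply star_lc, plus_star, H. Qed.

Section Congruence.

Variables a a' : term.

Lemma star_app_l b : star a a' -> star (App a b) (App a' b).
Proof. apply (star_plug (CAppL Hole b)); simpl; auto. Qed.

Lemma plus_app_l b : plus a a' -> plus (App a b) (App a' b).
Proof. apply (plus_plug (CAppL Hole b)); simpl; auto. Qed.

Lemma star_app_r v : valueb v = true -> star a a' -> star (App v a) (App v a').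
Proof. intros Hv. apply (star_plug (CAppR v Hole)); simpl; rewrite <- valueb_spec; auto. Qed.

Lemma plus_app_r v : valueb v = true -> plus a a' -> plus (App v a) (App v a').
Proof. intros Hv. apply (plus_plug (CAppR v Hole)); simpl; rewrite <- valueb_spec; auto. Qed.

Lemma star_reset : star a a' -> star (Reset a) (Reset a').
Proof. apply (star_plug (CReset Hole)); simpl; auto. Qed.

Lemma plus_reset : plus a a' -> plus (Reset a) (Reset a').
Proof. apply (plus_plug (CReset Hole)); simpl; auto. Qed.

End Congruence.

Inductive nsteps : nat -> term -> term -> Prop :=
| nsteps_refl t : nsteps 0 t t
| nsteps_step n t u v : step t u -> nsteps n u v -> nsteps (S n) t v.

Lemma star_nsteps a b : star a b -> exists n, nsteps n a b.
Proof.
  intros H; apply clos_rt_rt1n in H; induction H as [|a0 m b0 Hs _ [n Hn]].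
  - exists 0; constructor.
  - exists (S n); econstructor; eauto.
Qed.

Lemma nsteps_irreducible n a b : nsteps n a b -> reduce a = None -> a = b.
Proof. intros [|? ? ? ? Hs]; auto. apply step_reduce in Hs. congruence. Qed.

Lemma star_irreducible a b : star a b -> reduce a = None -> a = b.
Proof. intros [n Hn]%star_nsteps. exact (nsteps_irreducible n a b Hn). Qed.

Lemma nsteps_prefix m a b : nsteps m a b -> forall n c, nsteps n a c -> reduce c = None ->
  m <= n /\ nsteps (n - m) b c.
Proof.
  induction 1 as [t|m t u v Hs Hm IH]; intros n c Hn Hc.
  - rewrite Nat.sub_0_r. split; auto. lia.
  - inversion Hn as [t0|n' t0 u' v0 Hs' Hn']; subst.
    + apply step_reduce in Hs. congruence.
    + rewrite (step_deterministic _ _ _ Hs Hs') in *.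
      destruct (IH _ _ Hn' Hc) as [Hle Hrest]. split; [lia|]. exact Hrest.
Qed.

Lemma evaluates_reduce a b : evaluates a b <-> star a b /\ reduce b = None.
Proof. unfold evaluates. rewrite irreducible_reduce. reflexivity. Qed.

(** * Terms equal up to administrative redexes *)

Notation eta_kont z := (Lam (Reset (App (FVar z) (BVar 0)))).

Inductive adm : term -> term -> Prop :=
| adm_bvar i : adm (BVar i) (BVar i)
| adm_fvar x : adm (FVar x) (FVar x)
| adm_lam a a' : adm a a' -> adm (Lam a) (Lam a')
| adm_app a b a' b' : adm a a' -> adm b b' -> adm (App a b) (App a' b')
| adm_shift a a' : adm a a' -> adm (Shift a) (Shift a')
| adm_reset a a' : adm a a' -> adm (Reset a) (Reset a')
| adm_eta z a a' : adm a a' -> adm (Reset (App (FVar z) a)) (Reset (App (eta_kont z) a'))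
| adm_reset_reset a a' : adm a a' -> adm (Reset a) (Reset (Reset a'))
| adm_reset_value v v' : valueb v = true -> adm v v' -> adm v (Reset v').

Inductive adm_ctx : ctx -> ctx -> Prop :=
| adm_hole : adm_ctx Hole Hole
| adm_cappr v v' E E' : adm v v' -> adm_ctx E E' -> adm_ctx (CAppR v E) (CAppR v' E')
| adm_cappl E E' u u' : adm_ctx E E' -> adm u u' -> adm_ctx (CAppL E u) (CAppL E' u')
| adm_creset E E' : adm_ctx E E' -> adm_ctx (CReset E) (CReset E')
| adm_ceta z E E' : adm_ctx E E' ->
    adm_ctx (CReset (CAppR (FVar z) E)) (CReset (CAppR (eta_kont z) E'))
| adm_creset_reset E E' : adm_ctx E E' -> adm_ctx (CReset E) (CReset (CReset E')).

Lemma adm_refl t : adm t t.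
Proof. induction t; constructor; auto. Qed.

Lemma adm_plug E E' s s' : adm_ctx E E' -> adm s s' -> adm (plug E s) (plug E' s').
Proof.
  intros HE Hs; induction HE; simpl;
    auto using adm_app, adm_reset, adm_eta, adm_reset_reset.
Qed.

Lemma adm_open_rec b b' : adm b b' -> forall n u u', adm u u' ->
  adm (open_rec n u b) (open_rec n u' b').
Proof.
  induction 1; simpl; intros n u u' Hu; try (constructor; auto; fail).
  - destruct (Nat.eqb i n); auto. constructor.
  - apply adm_reset_value; auto. destruct v; simpl in *; auto; discriminate.
Qed.

Lemma adm_subst x u u' t : adm u u' -> adm (subst x u t) (subst x u' t).
Proof.
  intros H; induction t; simpl; try constructor; auto.
  destruct (Nat.eqb x a); auto; constructor.
Qed.

Lemma adm_lam_inv b w : adm (Lam b) w -> valueb w = true ->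
  exists b', w = Lam b' /\ adm b b'.
Proof. intros H; inversion H; subst; simpl; intros; eauto; discriminate. Qed.

Lemma adm_lam_inv_r a b' : adm a (Lam b') -> exists b, a = Lam b.
Proof. intros H; inversion H; subst; eauto. Qed.

Lemma adm_fvar_inv y w : adm (FVar y) w -> valueb w = true -> w = FVar y.
Proof. intros H; inversion H; subst; simpl; intros; auto; discriminate. Qed.

Lemma adm_valueb s s' : adm s s' -> reduce s' = None -> valueb s = valueb s'.
Proof.
  induction 1; simpl; intros Hr; auto.
  apply reduce_reset_none in Hr as (H1 & H2 & H3). rewrite IHadm; auto.
Qed.

Lemma adm_split_control_none s s' : adm s s' -> reduce s = None -> reduce s' = None ->
  split_control s = None -> split_control s' = None.
Proof.
  induction 1 as [| | | a b a' b' Ha IHa Hb IHb | | | | | v v' Hv]; intros Hr Hr' Hc;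
    simpl in *; auto; try discriminate.
  destruct (reduce_app_none _ _ Hr) as [Ra Hb0].
  destruct (reduce_app_none _ _ Hr') as [Ra' Hb0'].
  destruct (split_control a) as [[F1 b1]|] eqn:Ca; [discriminate|].
  rewrite IHa, <- (adm_valueb _ _ Ha Ra'); auto.
  destruct (valueb a) eqn:Va; auto.
  destruct (Hb0 eq_refl) as [Rb _].
  destruct (Hb0' (eq_trans (eq_sym (adm_valueb _ _ Ha Ra')) Va)) as [Rb' _].
  destruct (split_control b) as [[F2 b2]|]; [discriminate|]. rewrite IHb; auto.
Qed.

Lemma adm_split_control_some s s' F b : adm s s' -> reduce s = None -> reduce s' = None ->
  split_control s = Some (F, b) ->
  exists F' b', split_control s' = Some (F', b') /\ adm_ctx F F' /\ adm b b'.
Proof.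
  intros H; revert F b;
    induction H as [| | | a b a' b' Ha IHa Hb IHb | a a' Ha | | | | v v' Hv];
    intros F0 b0 Hr Hr' Hc; simpl in *; try discriminate.
  - destruct (reduce_app_none _ _ Hr) as [Ra Hb0].
    destruct (reduce_app_none _ _ Hr') as [Ra' Hb0'].
    pose proof (adm_valueb _ _ Ha Ra') as Va.
    destruct (split_control a) as [[F1 b1]|] eqn:Ca.
    + injection Hc as <- <-.
      destruct (IHa _ _ Ra Ra' eq_refl) as (F' & b1' & -> & HF & Hb1).
      exists (CAppL F' b'), b1'. repeat split; auto. constructor; auto.
    + rewrite (adm_split_control_none _ _ Ha Ra Ra' Ca), <- Va.
      destruct (valueb a) eqn:Va1; [|discriminate].
      destruct (Hb0 eq_refl) as [Rb _]. destruct (Hb0' (eq_sym Va)) as [Rb' _].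
      destruct (split_control b) as [[F2 b2]|] eqn:Cb; [|discriminate].
      injection Hc as <- <-.
      destruct (IHb _ _ Rb Rb' eq_refl) as (F' & b2' & -> & HF & Hb2).
      exists (CAppR a' F'), b2'. repeat split; auto. constructor; auto.
  - injection Hc as <- <-. exists Hole, a'. repeat split; auto. constructor.
  - rewrite split_control_value in Hc; auto. discriminate.
Qed.

Definition adm_nf_reachable (s s' : term) : Prop :=
  exists s'', star s' s'' /\ reduce s'' = None /\ adm s s''.

Lemma reduce_reset_adm_none a a' : adm a a' ->
  reduce (Reset a) = None -> reduce a' = None -> reduce (Reset a') = None.
Proof.
  intros Ha H Ra'. destruct (reduce_reset_none _ H) as (Ra & Va & Ca).
  simpl. rewrite Ra', <- (adm_valueb _ _ Ha Ra'), Va,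
    (adm_split_control_none _ _ Ha Ra Ra' Ca); reflexivity.
Qed.

Lemma reduce_reset_reset a : reduce (Reset a) = None -> reduce (Reset (Reset a)) = None.
Proof. intros H. simpl in *. rewrite H. reflexivity. Qed.

Lemma adm_nf_app a b a' b' : adm a a' -> adm b b' ->
  (reduce a = None -> adm_nf_reachable a a') ->
  (reduce b = None -> adm_nf_reachable b b') ->
  reduce (App a b) = None -> adm_nf_reachable (App a b) (App a' b').
Proof.
  intros Ha Hb IHa IHb H. destruct (reduce_app_none _ _ H) as [Ra Hb0].
  destruct (IHa Ra) as (a'' & Sa & Ra'' & Ha'').
  pose proof (adm_valueb _ _ Ha'' Ra'') as Va.
  destruct (valueb a) eqn:Va1.
  - destruct (Hb0 eq_refl) as [Rb Hnot_lam].
    destruct (IHb Rb) as (b'' & Sb & Rb'' & Hb'').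
    pose proof (adm_valueb _ _ Hb'' Rb'') as Vb.
    exists (App a'' b''). repeat split.
    + eapply rt_trans; [apply star_app_l, Sa|apply star_app_r; auto].
    + simpl. rewrite Ra'', <- Va, Rb''. destruct (valueb b'') eqn:Vb2; auto.
      destruct a'' as [| |body''| | |]; auto. exfalso.
      destruct (adm_lam_inv_r _ _ Ha'') as [body ->]. apply (Hnot_lam Vb body eq_refl).
    + constructor; auto.
  - exists (App a'' b'). repeat split.
    + apply star_app_l, Sa.
    + simpl. rewrite Ra'', <- Va. reflexivity.
    + constructor; auto.
Qed.

Lemma adm_nf_eta z a a' :
  (reduce a = None -> adm_nf_reachable a a') ->
  reduce (Reset (App (FVar z) a)) = None ->
  adm_nf_reachable (Reset (App (FVar z) a)) (Reset (App (eta_kont z) a')).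
Proof.
  rewrite reduce_reset_var_app. intros IH H.
  destruct (reduce a) eqn:Ra; [discriminate|].
  destruct (split_control a) as [[F b]|] eqn:Ca; [discriminate|].
  destruct (IH eq_refl) as (a'' & Sa & Ra'' & Ha'').
  pose proof (adm_valueb _ _ Ha'' Ra'') as Va.
  assert (Sr : star (Reset (App (eta_kont z) a')) (Reset (App (eta_kont z) a'')))
    by (apply star_reset, star_app_r; auto).
  destruct (valueb a) eqn:Va1.
  - exists (Reset (Reset (App (FVar z) a''))). repeat split.
    + eapply rt_trans; [exact Sr|]. apply rt_step, reduce_step. simpl.
      rewrite Ra'', <- Va. reflexivity.
    + simpl. rewrite Ra'', <- Va, split_control_value; auto.
    + apply adm_reset_reset, adm_app; auto; constructor.
  - exists (Reset (App (eta_kont z) a'')). repeat split; auto.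
    + simpl. rewrite Ra'', <- Va, (adm_split_control_none _ _ Ha'' Ra Ra'' Ca).
      reflexivity.
    + apply adm_eta; auto.
Qed.

Lemma adm_nf_reachable_of_normal s s' :
  adm s s' -> reduce s = None -> adm_nf_reachable s s'.
Proof.
  induction 1 as [i|x|a a' Ha _|a b a' b' Ha IHa Hb IHb|a a' Ha _|a a' Ha IHa
                 |z a a' Ha IHa|a a' Ha IHa|v v' Hv Hvv IHv]; intros H.
  - exists (BVar i); repeat split; [apply rt_refl|constructor].
  - exists (FVar x); repeat split; [apply rt_refl|constructor].
  - exists (Lam a'); repeat split; [apply rt_refl|constructor; auto].
  - apply adm_nf_app; auto.
  - exists (Shift a'); repeat split; [apply rt_refl|constructor; auto].
  - destruct (IHa (proj1 (reduce_reset_none _ H))) as (a'' & Sa & Ra'' & Ha'').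
    exists (Reset a''). repeat split.
    + apply star_reset, Sa.
    + apply (reduce_reset_adm_none a); auto.
    + constructor; auto.
  - apply adm_nf_eta; auto.
  - destruct (IHa (proj1 (reduce_reset_none _ H))) as (a'' & Sa & Ra'' & Ha'').
    exists (Reset (Reset a'')). repeat split.
    + apply star_reset, star_reset, Sa.
    + apply reduce_reset_reset, (reduce_reset_adm_none a); auto.
    + apply adm_reset_reset; auto.
  - destruct (IHv (reduce_value _ Hv)) as (v'' & Sv & Rv'' & Hv'').
    pose proof (adm_valueb _ _ Hv'' Rv'') as Vv.
    exists v''. repeat split; auto.
    eapply rt_trans; [apply star_reset, Sv|]. apply rt_step, reduce_step. simpl.
    rewrite Rv'', <- Vv, Hv. reflexivity.
Qed.

Definition adm_matches_step (s s' : term) : Prop :=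
  forall s1, reduce s = Some s1 -> exists s1', plus s' s1' /\ adm s1 s1'.

Lemma adm_step_app a b a' b' : adm a a' -> adm b b' ->
  adm_matches_step a a' -> adm_matches_step b b' ->
  adm_matches_step (App a b) (App a' b').
Proof.
  intros Ha Hb IHa IHb s1 H. simpl in H.
  destruct (reduce a) as [a1|] eqn:Ra.
  { injection H as <-. destruct (IHa _ Ra) as (a1' & Pa & Ha1).
    exists (App a1' b'). split; [apply plus_app_l, Pa|constructor; auto]. }
  destruct (adm_nf_reachable_of_normal _ _ Ha Ra) as (a'' & Sa & Ra'' & Ha'').
  pose proof (adm_valueb _ _ Ha'' Ra'') as Va.
  destruct (valueb a) eqn:Va1; [|discriminate].
  assert (Sa_l : star (App a' b') (App a'' b')) by (apply star_app_l, Sa).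
  destruct (reduce b) as [b1|] eqn:Rb.
  { injection H as <-. destruct (IHb _ Rb) as (b1' & Pb & Hb1).
    exists (App a'' b1'). split; [|constructor; auto].
    eapply star_plus_trans; [exact Sa_l|apply plus_app_r; auto]. }
  destruct (adm_nf_reachable_of_normal _ _ Hb Rb) as (b'' & Sb & Rb'' & Hb'').
  pose proof (adm_valueb _ _ Hb'' Rb'') as Vb.
  destruct (valueb b) eqn:Vb1; [|discriminate].
  destruct a as [| |body| | |]; try discriminate. injection H as <-.
  destruct (adm_lam_inv _ _ Ha'' (eq_sym Va)) as (body'' & -> & Hbody).
  exists (open body'' b''). split; [|apply adm_open_rec; auto].
  eapply star_plus_trans; [exact Sa_l|].
  eapply star_plus_trans; [apply star_app_r; [reflexivity|exact Sb]|].
  apply step_plus, reduce_step. simpl. rewrite reduce_value, <- Vb; auto.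
Qed.

Lemma adm_reset_contract a a'' s1 : adm a a'' -> reduce a = None -> reduce a'' = None ->
  reduce (Reset a) = Some s1 ->
  exists s1'', reduce (Reset a'') = Some s1'' /\ adm s1 s1'' /\ adm s1 (Reset s1'').
Proof.
  intros Ha Ra Ra'' H. pose proof (adm_valueb _ _ Ha Ra'') as Va.
  destruct (reduce_reset_cases _ _ H)
    as [(a1 & Ra1 & _)|[(_ & Va1 & ->)|(_ & Va1 & F & b & Ca & ->)]];
    [congruence| |].
  - exists a''. repeat split; auto.
    + simpl. rewrite Ra'', <- Va, Va1. reflexivity.
    + apply adm_reset_value; auto.
  - destruct (adm_split_control_some _ _ _ _ Ha Ra Ra'' Ca) as (F' & b' & Ca'' & HF & Hb).
    assert (Hbody : adm (open b (cont_of F)) (open b' (cont_of F'))).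
    { apply adm_open_rec; auto. apply adm_lam, adm_reset, adm_plug; auto. constructor. }
    exists (Reset (open b' (cont_of F'))). repeat split.
    + simpl. rewrite Ra'', <- Va, Va1, Ca''. reflexivity.
    + apply adm_reset, Hbody.
    + apply adm_reset_reset, Hbody.
Qed.

Lemma adm_step_reset a a' : adm a a' -> adm_matches_step a a' ->
  adm_matches_step (Reset a) (Reset a').
Proof.
  intros Ha IHa s1 H. destruct (reduce a) as [a1|] eqn:Ra.
  - destruct (reduce_reset_cases _ _ H) as [(a2 & Ra2 & ->)|[(Ra0 & _)|(Ra0 & _)]];
      [|congruence|congruence].
    rewrite Ra in Ra2; injection Ra2 as <-.
    destruct (IHa _ Ra) as (a1' & Pa & Ha1).
    exists (Reset a1'). split; [apply plus_reset, Pa|constructor; auto].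
  - destruct (adm_nf_reachable_of_normal _ _ Ha Ra) as (a'' & Sa & Ra'' & Ha'').
    destruct (adm_reset_contract _ _ _ Ha'' Ra Ra'' H) as (s1'' & R1 & Hs1 & _).
    exists s1''. split; auto.
    eapply star_plus_trans; [apply star_reset, Sa|apply step_plus, reduce_step, R1].
Qed.

Lemma adm_step_reset_reset a a' : adm a a' -> adm_matches_step a a' ->
  adm_matches_step (Reset a) (Reset (Reset a')).
Proof.
  intros Ha IHa s1 H. destruct (reduce a) as [a1|] eqn:Ra.
  - destruct (reduce_reset_cases _ _ H) as [(a2 & Ra2 & ->)|[(Ra0 & _)|(Ra0 & _)]];
      [|congruence|congruence].
    rewrite Ra in Ra2; injection Ra2 as <-.
    destruct (IHa _ Ra) as (a1' & Pa & Ha1).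
    exists (Reset (Reset a1')). split; [apply plus_reset, plus_reset, Pa|].
    apply adm_reset_reset; auto.
  - destruct (adm_nf_reachable_of_normal _ _ Ha Ra) as (a'' & Sa & Ra'' & Ha'').
    destruct (adm_reset_contract _ _ _ Ha'' Ra Ra'' H) as (s1'' & R1 & _ & Hs1).
    exists (Reset s1''). split; auto.
    eapply star_plus_trans; [apply star_reset, star_reset, Sa|].
    apply plus_reset, step_plus, reduce_step, R1.
Qed.

Lemma adm_step_eta z a a' : adm a a' -> adm_matches_step a a' ->
  adm_matches_step (Reset (App (FVar z) a)) (Reset (App (eta_kont z) a')).
Proof.
  intros Ha IHa s1 H. rewrite reduce_reset_var_app in H.
  destruct (reduce a) as [a1|] eqn:Ra.
  { injection H as <-. destruct (IHa _ Ra) as (a1' & Pa & Ha1).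
    exists (Reset (App (eta_kont z) a1')).
    split; [apply plus_reset, plus_app_r; auto|apply adm_eta; auto]. }
  destruct (split_control a) as [[F b]|] eqn:Ca; [injection H as <-|discriminate].
  destruct (adm_nf_reachable_of_normal _ _ Ha Ra) as (a'' & Sa & Ra'' & Ha'').
  pose proof (adm_valueb _ _ Ha'' Ra'') as Va.
  destruct (adm_split_control_some _ _ _ _ Ha'' Ra Ra'' Ca) as (F' & b' & Ca'' & HF & Hb).
  assert (Va1 : valueb a = false)
    by (destruct (valueb a) eqn:V; auto; rewrite split_control_value in Ca; [discriminate|exact V]).
  exists (Reset (open b' (cont_of (CAppR (eta_kont z) F')))). split.
  - eapply star_plus_trans; [apply star_reset, star_app_r, Sa; reflexivity|].
    apply step_plus, reduce_step. simpl. rewrite Ra'', <- Va, Va1, Ca''. reflexivity.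
  - apply adm_reset, adm_open_rec; auto.
    apply adm_lam, adm_eta, adm_plug; auto. constructor.
Qed.

Lemma adm_step s s' : adm s s' -> adm_matches_step s s'.
Proof.
  induction 1 as [| | | a b a' b' Ha IHa Hb IHb| | a a' Ha IHa| z a a' Ha IHa
                 | a a' Ha IHa| v v' Hv]; try (intros s1 Hred; discriminate).
  - apply adm_step_app; auto.
  - apply adm_step_reset; auto.
  - apply adm_step_eta; auto.
  - apply adm_step_reset_reset; auto.
  - intros s1 Hred. rewrite reduce_value in Hred; auto. discriminate.
Qed.

(** * Normal forms *)

Lemma normal_form_cases t : lc t -> reduce t = None ->
  valueb t = true \/ (exists F b, split_control t = Some (F, b)) \/
  (exists E x v, eval_ctx E /\ is_value v /\ t = plug E (App (FVar x) v)).
Proof.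
  unfold lc. induction t; simpl; intros Hl Hr; auto.
  - apply andb_true_iff in Hl as [H1 H2].
    destruct (reduce_app_none _ _ Hr) as [R1 Hb].
    destruct (IHt1 H1 R1) as [V1|[(F & b & C1)|(E & x & v & HE & Hv & ->)]].
    + destruct (Hb V1) as [R2 Hnot_lam].
      rewrite (split_control_value _ V1), V1.
      destruct (IHt2 H2 R2) as [V2|[(F & b & C2)|(E & x & v & HE & Hv & ->)]].
      * destruct t1; try discriminate.
        -- right; right. exists Hole, a, t2. simpl. rewrite <- valueb_spec. auto.
        -- exfalso; apply (Hnot_lam V2 t1 eq_refl).
      * rewrite C2. right; left; eauto.
      * right; right. exists (CAppR t1 E), x, v. simpl. rewrite <- valueb_spec. auto.
    + rewrite C1. right; left; eauto.
    + right; right. exists (CAppL E t2), x, v. simpl. auto.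
  - right; left; eauto.
  - destruct (reduce_reset_none _ Hr) as (R & V & C).
    destruct (IHt Hl R) as [V'|[(F & b & C')|(E & x & v & HE & Hv & ->)]];
      [congruence|congruence|].
    right; right. exists (CReset E), x, v. simpl. auto.
Qed.

Lemma valueb_plug_var_app E x v : valueb (plug E (App (FVar x) v)) = false.
Proof. destruct E; reflexivity. Qed.

Lemma adm_open_stuck s s' E x v : adm s s' -> reduce s' = None ->
  eval_ctx E -> is_value v -> s = plug E (App (FVar x) v) ->
  exists E' v', eval_ctx E' /\ is_value v' /\ s' = plug E' (App (FVar x) v') /\
    adm_ctx E E' /\ adm v v'.
Proof.
  intros H; revert E; induction H as [| | | a b a' b' Ha IHa Hb IHb| |a a' Ha IHa
                                     |z a a' Ha IHa|a a' Ha IHa|w w' Hw]; intros E0 Hr HE Hv Heq;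
    try (destruct E0; discriminate).
  - destruct (reduce_app_none _ _ Hr) as [Ra' Hb'].
    destruct E0 as [|w E1|E1 c|E1]; simpl in Heq; try discriminate; injection Heq as -> ->.
    + assert (Va' : valueb a' = true) by (rewrite <- (adm_valueb _ _ Ha Ra'); auto).
      rewrite (adm_fvar_inv _ _ Ha Va') in *.
      destruct (Hb' eq_refl) as [Rb' _].
      exists Hole, b'. simpl. repeat split; auto; [|constructor].
      rewrite <- valueb_spec, <- (adm_valueb _ _ Hb Rb'), valueb_spec. auto.
    + destruct HE as [Hw HE1].
      assert (Va' : valueb a' = true)
        by (rewrite <- (adm_valueb _ _ Ha Ra'); apply valueb_spec; auto).
      destruct (IHb E1 (proj1 (Hb' Va')) HE1 Hv eq_refl)
        as (E' & v' & HE' & Hv' & -> & HEE & Hvv).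
      exists (CAppR a' E'), v'. simpl. rewrite <- valueb_spec.
      repeat split; auto. constructor; auto.
    + destruct (IHa E1 Ra' HE Hv eq_refl) as (E' & v' & HE' & Hv' & -> & HEE & Hvv).
      exists (CAppL E' b'), v'. simpl. repeat split; auto. constructor; auto.
  - destruct (reduce_reset_none _ Hr) as (Ra' & _ & _).
    destruct E0 as [|w E1|E1 c|E1]; simpl in Heq; try discriminate; injection Heq as ->.
    destruct (IHa E1 Ra' HE Hv eq_refl) as (E' & v' & HE' & Hv' & -> & HEE & Hvv).
    exists (CReset E'), v'. simpl. repeat split; auto. constructor; auto.
  - destruct (reduce_reset_none _ Hr) as (Ra' & _ & _).
    destruct (reduce_app_none _ _ Ra') as [_ Hb']. destruct (Hb' eq_refl) as [Ra'' Hnot_lam].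
    destruct E0 as [|w E1|E1 c|E1]; simpl in Heq; try discriminate; injection Heq as Heq.
    destruct E1 as [|w E2|E2 c|E2]; simpl in Heq; try discriminate.
    + injection Heq as <- ->. exfalso.
      apply (Hnot_lam (eq_trans (eq_sym (adm_valueb _ _ Ha Ra''))
                                (proj2 (valueb_spec _) Hv)) _ eq_refl).
    + injection Heq as <- Heq. destruct HE as [_ HE2].
      destruct (IHa E2 Ra'' HE2 Hv Heq) as (E' & v' & HE' & Hv' & -> & HEE & Hvv).
      exists (CReset (CAppR (eta_kont z) E')), v'. simpl. repeat split; auto.
      apply adm_ceta; auto.
    + injection Heq as Heq _. destruct E2; discriminate.
  - destruct (reduce_reset_none _ Hr) as (Ra' & _ & _).
    destruct (reduce_reset_none _ Ra') as (Ra'' & _ & _).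
    destruct E0 as [|w E1|E1 c|E1]; simpl in Heq; try discriminate; injection Heq as ->.
    destruct (IHa E1 Ra'' HE Hv eq_refl) as (E' & v' & HE' & Hv' & -> & HEE & Hvv).
    exists (CReset (CReset E')), v'. simpl. repeat split; auto. apply adm_creset_reset; auto.
  - subst. rewrite valueb_plug_var_app in Hw. discriminate.
Qed.

(** The two cases of [ctx_rel]. *)
Lemma adm_ctx_split E0 E1 : adm_ctx E0 E1 -> eval_ctx E0 -> eval_ctx E1 ->
  (pure_ctx E0 /\ pure_ctx E1) \/
  (exists E0' F0 E1' F1,
     eval_ctx E0' /\ eval_ctx E1' /\ pure_ctx F0 /\ pure_ctx F1 /\
     E0 = ccomp E0' (CReset F0) /\ E1 = ccomp E1' (CReset F1) /\
     (forall y, adm (plug E0' (FVar y)) (plug E1' (FVar y))) /\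
     (forall y, adm (Reset (plug F0 (FVar y))) (Reset (plug F1 (FVar y))))).
Proof.
  induction 1 as [|v v' E E' Hv HE IH|E E' u u' HE IH Hu|E E' HE IH|z E E' HE IH
                 |E E' HE IH]; simpl; intros G0 G1.
  - left; auto.
  - destruct G0 as [Hv0 G0], G1 as [Hv1 G1].
    destruct (IH G0 G1) as [[P P']|(E0' & F0 & E1' & F1 & A & B & C & D & -> & -> & I & J)].
    + left; auto.
    + right. exists (CAppR v E0'), F0, (CAppR v' E1'), F1. simpl.
      repeat split; auto. intros; constructor; auto.
  - destruct (IH G0 G1) as [[P P']|(E0' & F0 & E1' & F1 & A & B & C & D & -> & -> & I & J)].
    + left; auto.
    + right. exists (CAppL E0' u), F0, (CAppL E1' u'), F1. simpl.
      repeat split; auto. intros; constructor; auto.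
  - destruct (IH G0 G1) as [[P P']|(E0' & F0 & E1' & F1 & A & B & C & D & -> & -> & I & J)].
    + right. exists Hole, E, Hole, E'. simpl. repeat split; auto.
      * intros; constructor.
      * intros; constructor. apply adm_plug; auto. constructor.
    + right. exists (CReset E0'), F0, (CReset E1'), F1. simpl.
      repeat split; auto. intros; constructor; auto.
  - destruct G0 as [_ G0], G1 as [_ G1].
    destruct (IH G0 G1) as [[P P']|(E0' & F0 & E1' & F1 & A & B & C & D & -> & -> & I & J)].
    + right. exists Hole, (CAppR (FVar z) E), Hole, (CAppR (eta_kont z) E'). simpl.
      repeat split; auto.
      * intros; constructor.
      * intros; apply adm_eta, adm_plug; auto. constructor.
    + right. exists (CReset (CAppR (FVar z) E0')), F0, (CReset (CAppR (eta_kont z) E1')), F1.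
      simpl. repeat split; auto. intros; apply adm_eta; auto.
  - destruct (IH G0 G1) as [[P P']|(E0' & F0 & E1' & F1 & A & B & C & D & -> & -> & I & J)].
    + right. exists Hole, E, (CReset Hole), E'. simpl. repeat split; auto.
      * intros; apply adm_reset_value; [reflexivity|constructor].
      * intros; constructor. apply adm_plug; auto. constructor.
    + right. exists (CReset E0'), F0, (CReset (CReset E1')), F1. simpl.
      repeat split; auto. intros; apply adm_reset_reset; auto.
Qed.

(** * The refined normal form lifting of [adm] *)

Lemma rnf_mono (R R' : relation_t) s t :
  (forall a b, R a b -> R' a b) -> rnf R s t -> rnf R' s t.
Proof.
  intros HR H; destruct H as [v0 v1 Hv|E0 E1 x v0 v1 HE0 HE1 HE Hv|F0 F1 t0 t1 HF0 HF1 Ht].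
  - apply rnf_val. destruct Hv as (A & B & C). repeat split; auto.
  - apply rnf_open; auto.
    + destruct HE as [(E0' & F0 & E1' & F1 & A & B & C & D & G & I & J)|(A & B & C)].
      * left. exists E0', F0, E1', F1. repeat split; auto; apply HR, J; auto.
      * right. repeat split; auto.
    + destruct Hv as (A & B & C). repeat split; auto.
  - apply rnf_control; auto.
Qed.

Lemma rnf_flip (R : relation_t) s t : rnf R s t -> rnf (fun a b => R b a) t s.
Proof.
  intros H; destruct H as [v0 v1 Hv|E0 E1 x v0 v1 HE0 HE1 HE Hv|F0 F1 t0 t1 HF0 HF1 Ht].
  - apply rnf_val. destruct Hv as (A & B & C). repeat split; auto.
  - apply rnf_open; auto.
    + destruct HE as [(E0' & F0 & E1' & F1 & A & B & C & D & G & I & J)|(A & B & C)].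
      * left. exists E1', F1, E0', F0. repeat split; auto; apply J; auto.
      * right. repeat split; auto.
    + destruct Hv as (A & B & C). repeat split; auto.
  - apply rnf_control; auto.
Qed.

Definition adm_lc (a b : term) : Prop := adm a b /\ lc a /\ lc b.

Lemma rnf_value_adm v v' : adm v v' -> valueb v = true -> valueb v' = true ->
  lc v -> lc v' -> rnf_value adm_lc v v'.
Proof.
  intros H V V' L L'. split; [|split]; try apply valueb_spec; auto.
  intros y _ _. destruct v; try discriminate.
  - rewrite (adm_fvar_inv _ _ H V'). repeat split; auto using adm_refl.
  - destruct (adm_lam_inv _ _ H V') as (b' & -> & Hb). simpl.
    unfold lc in *; simpl in *. repeat split.
    + apply adm_open_rec; auto. constructor.
    + apply lc_at_open_rec; auto.
    + apply lc_at_open_rec; auto.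
Qed.

Lemma rnf_adm_control F F' b b' : pure_ctx F -> pure_ctx F' -> adm_ctx F F' -> adm b b' ->
  lc (plug F (Shift b)) -> lc (plug F' (Shift b')) ->
  rnf adm_lc (plug F (Shift b)) (plug F' (Shift b')).
Proof.
  unfold lc. rewrite !lc_at_plug. simpl.
  intros P P' HF Hb [LF Lb]%andb_true_iff [LF' Lb']%andb_true_iff.
  apply rnf_control; auto. intros k _ _ _ _. repeat split.
  - apply adm_reset, adm_open_rec; auto.
    apply adm_lam, adm_reset, adm_app, adm_plug; auto; constructor.
  - apply lc_at_open_rec; auto. simpl. rewrite lc_at_plug, lc_ctx_at_S; auto.
  - apply lc_at_open_rec; auto. simpl. rewrite lc_at_plug, lc_ctx_at_S; auto.
Qed.

Lemma rnf_adm_open E E' x v v' : eval_ctx E -> eval_ctx E' -> adm_ctx E E' -> adm v v' ->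
  is_value v -> is_value v' ->
  lc (plug E (App (FVar x) v)) -> lc (plug E' (App (FVar x) v')) ->
  rnf adm_lc (plug E (App (FVar x) v)) (plug E' (App (FVar x) v')).
Proof.
  unfold lc. rewrite !lc_at_plug. simpl.
  intros HE HE' HEE Hv V V' [LE Lv]%andb_true_iff [LE' Lv']%andb_true_iff.
  apply rnf_open; auto; [|apply rnf_value_adm; auto; apply valueb_spec; auto].
  destruct (adm_ctx_split _ _ HEE HE HE')
    as [[P P']|(E0 & F0 & E1 & F1 & A & B & C & D & -> & -> & I & J)].
  - right. repeat split; auto.
    + apply adm_plug; auto. constructor.
    + unfold lc. rewrite lc_at_plug, LE. reflexivity.
    + unfold lc. rewrite lc_at_plug, LE'. reflexivity.
  - rewrite !lc_ctx_at_ccomp in LE, LE'. simpl in LE, LE'.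
    apply andb_true_iff in LE as [LE0 LF0]. apply andb_true_iff in LE' as [LE1 LF1].
    left. exists E0, F0, E1, F1. repeat split; auto;
      unfold lc; simpl; rewrite lc_at_plug; simpl; rewrite ?LE0, ?LE1, ?LF0, ?LF1; auto.
Qed.

Lemma rnf_adm_normal s s' : adm_lc s s' -> reduce s = None -> reduce s' = None ->
  rnf adm_lc s s'.
Proof.
  intros (H & L & L') R R'.
  destruct (normal_form_cases s L R) as [V|[(F & b & C)|(E & x & v & HE & Hv & ->)]].
  - apply rnf_val, rnf_value_adm; auto. rewrite <- (adm_valueb _ _ H R'); auto.
  - destruct (adm_split_control_some _ _ _ _ H R R' C) as (F' & b' & C' & HF & Hb).
    destruct (split_control_sound _ _ _ C) as [-> P].
    destruct (split_control_sound _ _ _ C') as [-> P'].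
    apply rnf_adm_control; auto.
  - destruct (adm_open_stuck _ _ E x v H R' HE Hv eq_refl)
      as (E' & v' & HE' & Hv' & -> & HEE & Hvv).
    apply rnf_adm_open; auto.
Qed.

(** * Bisimulation *)

Lemma adm_lc_step a a1 b : adm_lc a b -> reduce a = Some a1 ->
  exists b1, plus b b1 /\ adm_lc a1 b1.
Proof.
  intros (H & La & Lb) R. destruct (adm_step _ _ H _ R) as (b1 & Pb & H1).
  exists b1. repeat split; eauto using reduce_lc, plus_lc.
Qed.

Lemma adm_lc_normal a b : adm_lc a b -> reduce a = None ->
  exists b0, star b b0 /\ reduce b0 = None /\ adm_lc a b0.
Proof.
  intros (H & La & Lb) R.
  destruct (adm_nf_reachable_of_normal _ _ H R) as (b0 & Sb & Rb & H0).
  exists b0. repeat split; eauto using star_lc.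
Qed.

Lemma adm_lc_forward a a0 b : star a a0 -> reduce a0 = None -> adm_lc a b ->
  exists b0, star b b0 /\ reduce b0 = None /\ adm_lc a0 b0.
Proof.
  intros H; revert b; apply clos_rt_rt1n in H.
  induction H as [a|a a1 a0 Hs _ IH]; intros b Ra0 Hab; [apply adm_lc_normal; auto|].
  destruct (adm_lc_step _ _ _ Hab (step_reduce _ _ Hs)) as (b1 & Pb & Hab1).
  destruct (IH b1 Ra0 Hab1) as (b0 & Sb & Rb & Hab0).
  exists b0. split; [|split]; auto. eapply rt_trans; [apply plus_star|]; eauto.
Qed.

(** Since each step of [a] costs at least one step of [b], induction on the
    length of the reduction of [b] terminates. *)
Lemma adm_lc_backward n a b b0 : nsteps n b b0 -> reduce b0 = None -> adm_lc a b ->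
  exists a0, star a a0 /\ reduce a0 = None /\ adm_lc a0 b0.
Proof.
  revert a b; induction n as [n IH] using (well_founded_induction lt_wf).
  intros a b Hn Rb0 Hab. destruct (reduce a) as [a1|] eqn:Ra.
  - destruct (adm_lc_step _ _ _ Hab Ra) as (b1 & (m & Hs & Sb) & Hab1).
    destruct (star_nsteps _ _ Sb) as [k Hk].
    destruct (nsteps_prefix _ _ _ (nsteps_step _ _ _ _ Hs Hk) _ _ Hn Rb0) as [Hle Hrest].
    destruct (IH (n - S k) ltac:(lia) a1 b1 Hrest Rb0 Hab1) as (a0 & Sa & Ra0 & Hab0).
    exists a0. split; auto. eapply rt_trans; [apply rt_step, reduce_step, Ra|exact Sa].
  - destruct (adm_lc_normal _ _ Hab Ra) as (b'' & Sb & Rb'' & Hab'').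
    destruct (star_nsteps _ _ Sb) as [k Hk].
    destruct (nsteps_prefix _ _ _ Hk _ _ Hn Rb0) as [_ Hrest].
    rewrite <- (nsteps_irreducible _ _ _ Hrest Rb'').
    exists a. split; [apply rt_refl|auto].
Qed.

Lemma adm_lc_simulation : rnf_simulation adm_lc.
Proof.
  intros a b a0 Hab [Sa Ra0]%evaluates_reduce.
  destruct (adm_lc_forward _ _ _ Sa Ra0 Hab) as (b0 & Sb & Rb0 & Hab0).
  exists b0. split; [apply evaluates_reduce; auto|apply rnf_adm_normal; auto].
Qed.

Lemma adm_lc_simulation_flip : rnf_simulation (fun a b => adm_lc b a).
Proof.
  intros b a b0 Hab [Sb Rb0]%evaluates_reduce.
  destruct (star_nsteps _ _ Sb) as [n Hn].
  destruct (adm_lc_backward _ _ _ _ Hn Rb0 Hab) as (a0 & Sa & Ra0 & Hab0).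
  exists a0. split; [apply evaluates_reduce; auto|].
  apply rnf_flip, rnf_adm_normal; auto.
Qed.

(** The witness is [R] extended with the pair [(a, b)]. *)
Lemma rnf_bisim_of_normal (R : relation_t) a b :
  rnf_simulation R -> rnf_simulation (fun s t => R t s) ->
  reduce a = None -> reduce b = None -> rnf R a b -> rnf_bisim a b.
Proof.
  intros HR HR' Ra Rb Hab.
  set (R' := fun s t => (s = a /\ t = b) \/ R s t).
  assert (Hmono : forall s t, R s t -> R' s t) by (unfold R'; auto).
  exists R'. split; [split|left; auto].
  - intros s t s0 [[-> ->]|Hst] Hev.
    + apply evaluates_reduce in Hev as [Sa Ra0].
      rewrite <- (star_irreducible _ _ Sa Ra). exists b.
      split; [apply evaluates_reduce; split; auto; apply rt_refl|].
      apply (rnf_mono R); auto.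
    + destruct (HR _ _ _ Hst Hev) as (t0 & Hev' & Hrnf).
      exists t0. split; auto. apply (rnf_mono R); auto.
  - intros t s t0 [[-> ->]|Hst] Hev.
    + apply evaluates_reduce in Hev as [Sb Rb0].
      rewrite <- (star_irreducible _ _ Sb Rb). exists a.
      split; [apply evaluates_reduce; split; auto; apply rt_refl|].
      apply (rnf_flip R'), (rnf_mono R); auto.
    + destruct (HR' _ _ _ Hst Hev) as (s0 & Hev' & Hrnf).
      exists s0. split; auto. apply (rnf_mono (fun s t => R t s)); auto.
Qed.

Lemma lam_reset_app_plug F x z : ~ In x (fv_ctx F) -> x <> z ->
  lam x (Reset (App (FVar z) (plug F (FVar x)))) =
  Lam (Reset (App (FVar z) (plug F (BVar 0)))).
Proof.
  intros HxF Hxz. unfold lam, close. simpl.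
  rewrite (proj2 (Nat.eqb_neq x z) Hxz), close_rec_plug; auto.
  simpl. rewrite Nat.eqb_refl. reflexivity.
Qed.

Lemma lc_reset_app_plug F z : lc_ctx_at 0 F = true ->
  lc (Lam (Reset (App (FVar z) (plug F (BVar 0))))).
Proof. intros HF. unfold lc; simpl. rewrite lc_at_plug, lc_ctx_at_S; auto. Qed.

Theorem proposition6 :
  forall (F : ctx) (t : term) (k k' x : atom),
    pure_ctx F -> lc_ctx F -> lc t ->
    ~ In k' (fv_ctx F) -> ~ In k' (fv t) -> ~ In x (fv_ctx F) -> x <> k' ->
    rnf_bisim
      (plug F (shift k t))
      (shift k' (subst k (lam x (Reset (App (FVar k') (plug F (FVar x))))) t)).
Proof.
  intros F t k k' x HF HlF Ht Hk'F Hk't HxF Hxk'.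
  apply lc_ctx_at_of_lc_ctx in HlF.
  rewrite lam_reset_app_plug; auto.
  pose proof (lc_reset_app_plug F k' HlF) as Hcont.
  apply (rnf_bisim_of_normal adm_lc);
    [apply adm_lc_simulation|apply adm_lc_simulation_flip|apply reduce_plug_shift, HF
    |reflexivity|].
  apply (rnf_control _ _ Hole); [exact HF|exact I|]. intros k'' _ _ _ _.
  unfold open, close. rewrite !open_rec_close_rec by auto using lc_at_subst.
  rewrite subst_subst_fresh by exact Hk't. simpl subst.
  rewrite Nat.eqb_refl, subst_plug by exact Hk'F. simpl subst.
  repeat split; unfold lc; simpl; auto using lc_at_subst, lc_reset_app_plug.
  apply adm_reset, adm_subst, adm_lam, adm_eta, adm_refl.
Qed.
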